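(* For all integers $n\ge1$, $k\ge1$ and $0\le p\le n$, $$\sum_{j=0}^p(-1)^j\binom{n-j}{p-j}\binom{n+k-j}{k}\binom{n+1}{j}=\binom{n+k-p}{k}\binom{k-1}{p}=\sum_{s=p}^n\binom{s}{p}\binom{k-1}{s}\binom{n+1}{n-s}.$$ *)

From mathcomp Require Import all_boot all_order all_algebra.

From mathcomp Require Import all_boot all_order all_algebra.
From mathcomp Require Import ring zify.
Import GRing.Theory.

(* After trinomial revision,
   [C(n-j, p-j) C(n+k-j, k) = C(n+k-j, p-j) C(n+k-p, k)], the first sum is
   [C(n+k-p, k)] times the alternating convolution
   [sum_j (-1)^j C(N, j) C(M-j, p-j) = C(M-N, p)] with [N = n+1], [M = n+k].
   In the second sum, [C(s, p) C(k-1, s) = C(k-1, p) C(k-1-p, s-p)] and the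
   remaining sum is a Vandermonde convolution equal to [C(n+k-p, n-p)]. *)

Lemma mul_bin_trinomial a b c : (c <= b)%N ->
  ('C(a, b) * 'C(b, c) = 'C(a, c) * 'C(a - c, b - c))%N.
Proof.
move=> le_cb; have [le_ba | lt_ab] := leqP b a; last first.
  rewrite bin_small // mul0n.
  have [le_ca | lt_ac] := leqP c a; last by rewrite bin_small.
  by rewrite (@bin_small (a - c)) ?muln0 //; lia.
have le_ca : (c <= a)%N by lia.
have le_bc_ac : (b - c <= a - c)%N by lia.
have facts_gt0 : (0 < c`! * (b - c)`! * (a - b)`!)%N by rewrite !muln_gt0 !fact_gt0.
apply/eqP; rewrite -(eqn_pmul2r facts_gt0); apply/eqP.
have lhsE : ('C(a, b) * 'C(b, c) * (c`! * (b - c)`! * (a - b)`!)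
             = 'C(a, b) * ('C(b, c) * (c`! * (b - c)`!)) * (a - b)`!)%N by ring.
have rhsE : ('C(a, c) * 'C(a - c, b - c) * (c`! * (b - c)`! * (a - b)`!)
             = 'C(a, c) * c`! * ('C(a - c, b - c) * ((b - c)`! * (a - b)`!)))%N
  by ring.
have sub_ab : (a - c - (b - c) = a - b)%N by lia.
rewrite lhsE rhsE bin_fact // -mulnA bin_fact //.
by rewrite -sub_ab bin_fact // -mulnA bin_fact.
Qed.

Lemma mul_bin_addn a b k : (b <= a)%N ->
  ('C(a, b) * 'C(a + k, k) = 'C(a + k, b) * 'C(a + k - b, k))%N.
Proof.
move=> le_ba.
rewrite -(@bin_sub (a + k) k) ?leq_addl // addnK mulnC mul_bin_trinomial //.
rewrite -(@bin_sub (a + k - b) k); last by lia.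
by have -> : (a + k - b - k = a - b)%N by lia.
Qed.

Local Open Scope ring_scope.

Lemma alternating_bin_conv (N M p : nat) : (N <= M)%N ->
  \sum_(j < p.+1) (-1) ^+ j * ('C(N, j) * 'C(M - j, p - j))%:R
    = 'C(M - N, p)%:R :> int.
Proof.
elim: N M p => [|N IHN] M p le_NM.
  rewrite big_ord_recl big1 => [|i _]; last by rewrite bin0n mul0n mulr0.
  by rewrite addr0 expr0 mul1r bin0 mul1n !subn0.
case: M le_NM => [//|M] le_NM; case: p => [|p].
  by rewrite big_ord_recl big_ord0 !bin0 addr0 expr0 mul1r.
(* Pascal's rule in [N] splits the sum into the instances [(M+1, p+1)] and
   [(M, p)] of the induction hypothesis. *)
have IH1 := IHN M.+1 p.+1 (ltnW le_NM).
have IH2 := IHN M p le_NM.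
rewrite big_ord_recl in IH1; rewrite big_ord_recl /=.
under eq_bigr => i _ do
  rewrite /bump /= add1n binS subSS subSS mulnDl natrD mulrDr.
rewrite big_split /= addrA subSS.
have pascal : 'C(M - N, p.+1)%:R = 'C(M.+1 - N, p.+1)%:R - 'C(M - N, p)%:R :> int.
  by rewrite subSn // binS natrD addrK.
rewrite pascal -IH1 -IH2 !subn0 !bin0 !mul1n expr0 !mul1r -!addrA.
congr (_ + (_ + _)); rewrite -sumrN; apply: eq_bigr => i _.
by rewrite exprS mulN1r mulNr.
Qed.

Lemma alternating_bin_sum n k p : (1 <= k)%N -> (p <= n)%N ->
  \sum_(0 <= j < p.+1)
      (-1) ^+ j * ('C(n - j, p - j) * 'C(n + k - j, k) * 'C(n.+1, j))%:R
    = ('C(n + k - p, k) * 'C(k - 1, p))%:R :> int.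
Proof.
move=> k_gt0 le_pn.
have termE (j : 'I_p.+1) :
    ('C(n - j, p - j) * 'C(n + k - j, k) * 'C(n.+1, j)
     = 'C(n.+1, j) * 'C(n + k - j, p - j) * 'C(n + k - p, k))%N.
  have le_jp := ltn_ord j.
  have -> : (n + k - j = n - j + k)%N by lia.
  rewrite mul_bin_addn; last by lia.
  have -> : (n - j + k - (p - j) = n + k - p)%N by lia.
  by rewrite mulnC mulnA.
rewrite big_mkord; under eq_bigr => j _ do rewrite termE natrM mulrA.
rewrite -mulr_suml alternating_bin_conv; last by lia.
have -> : (n + k - n.+1 = k - 1)%N by lia.
by rewrite natrM mulrC.
Qed.

Lemma bin_Vandermonde_sum n k p : (1 <= k)%N -> (p <= n)%N ->
  ('C(n + k - p, k) * 'C(k - 1, p)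
    = \sum_(p <= s < n.+1) 'C(s, p) * 'C(k - 1, s) * 'C(n.+1, n - s))%N.
Proof.
move=> k_gt0 le_pn.
rewrite (big_addn 0 n.+1 p) big_mkord.
have -> : (n.+1 - p = (n - p).+1)%N by lia.
have shiftE t : (n - (t + p) = n - p - t)%N by lia.
under eq_bigr => t _ do rewrite [('C(t + p, p) * _)%N]mulnC
  mul_bin_trinomial ?leq_addl // addnK -mulnA shiftE.
rewrite -big_distrr /= binomial.Vandermonde mulnC.
have [le_pk | lt_kp] := leqP p (k - 1); last by rewrite bin_small.
have -> : (k - 1 - p + n.+1 = n + k - p)%N by lia.
rewrite -(@bin_sub (n + k - p) k); last by lia.
by have -> : (n + k - p - k = n - p)%N by lia.
Qed.

Theorem mainTheorem6 (n k p : nat) (hn : (1 <= n)%N) (hk : (1 <= k)%N)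
    (hp : (p <= n)%N) :
  (\sum_(0 <= j < p.+1)
      (-1) ^+ j * ('C(n - j, p - j) * 'C(n + k - j, k) * 'C(n.+1, j))%:R
    = ('C(n + k - p, k) * 'C(k - 1, p))%:R :> int)
  /\
  ('C(n + k - p, k) * 'C(k - 1, p)
    = \sum_(p <= s < n.+1) 'C(s, p) * 'C(k - 1, s) * 'C(n.+1, n - s))%N.
Proof.
by split; [exact: alternating_bin_sum | exact: bin_Vandermonde_sum].
Qed.
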